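(* Let $\mathbb{S}:=\mathbb{R}/\mathbb{Z}$ and let $\gamma_{3_1}:\mathbb{S}\to\mathbb{R}^3$ be the ideal trefoil, parameterized with constant speed such that $\gamma_{3_1}(0)$ is the outer point of the trefoil on a symmetry axis. Assume: (i) $\gamma_{3_1}$ admits a contact function $\sigma$ (see context); (ii) $\gamma_{3_1}$ is symmetric under a $120^\circ$ rotation about an axis and under three $180^\circ$ rotations about axes perpendicular to it; (iii) with $s_i:=\sigma^i(0)$, the tuple $b_9=(s_0,\dots,s_8)$ is a nine-cycle, i.e. $\sigma^9(0)=0$, and as the parameter runs from $0$ to $1$ the curve passes through the points $s_i$ in the order $s_0,s_7,s_5,s_3,s_1,s_8,s_6,s_4,s_2$. Then for indices $i,j$ (taken mod $9$), $\sigma$ maps the parameter interval $[s_i,s_j]$ onto $[s_{i+1},s_{j+1}]$. In particular, defining the pieces $\beta_1:=\gamma_{3_1}|_{[s_0,s_7]}$, $\beta_2:=\gamma_{3_1}|_{[s_6,s_4]}$, $\beta_3:=\gamma_{3_1}|_{[s_3,s_1]}$, $\tilde\beta_1:=\gamma_{3_1}|_{[s_2,s_0]}$, $\tilde\beta_2:=\gamma_{3_1}|_{[s_8,s_6]}$, $\tilde\beta_3:=\gamma_{3_1}|_{[s_5,s_3]}$, $\alpha_1:=\gamma_{3_1}|_{[s_1,s_8]}$, $\alpha_2:=\gamma_{3_1}|_{[s_7,s_5]}$, $\alpha_3:=\gamma_{3_1}|_{[s_4,s_2]}$, following the contact in the $\sigma$ direction gives the sequence $\alpha_1\to\tilde\beta_1\to\beta_3\to\alpha_3\to\tilde\beta_3\to\beta_2\to\alpha_2\to\tilde\beta_2\to\beta_1\to\alpha_1$,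 each piece being in one-to-one contact with the next.
   Context: For a $C^1$ closed curve $\gamma:\mathbb{S}\to\mathbb{R}^3$, the thickness is $\Delta[\gamma]:=\inf R(\gamma(s),\gamma(\sigma),\gamma(\tau))$ over pairwise distinct $s,\sigma,\tau\in\mathbb{S}$, where $R(x,y,z)$ is the radius of the smallest circle through $x,y,z$. The ideal trefoil minimizes length divided by thickness in the trefoil knot class. Parameters $s,t$ are in contact if $|\gamma(t)-\gamma(s)|=2\Delta[\gamma]$ and $\gamma(t)-\gamma(s)$ is orthogonal to $\gamma'(s)$ and $\gamma'(t)$. A contact function is a continuous, bijective, orientation-preserving map $\sigma:\mathbb{S}\to\mathbb{S}$ such that $\gamma_{3_1}(s)-\gamma_{3_1}(\sigma(s))$ is a contact chord for every $s$. Intervals $[a,b]$ in $\mathbb{S}$ denote the arc from $a$ to $b$ in the positive direction; $\sigma^i$ is the $i$-fold composition. *)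

From Stdlib Require Import Reals Lra.
From Coquelicot Require Import Coquelicot.
Open Scope R_scope.

Definition vec := (R * R * R)%type.
Definition vx (v : vec) : R := fst (fst v).
Definition vy (v : vec) : R := snd (fst v).
Definition vz (v : vec) : R := snd v.
Definition mkv (a b c : R) : vec := ((a, b), c).
Definition vadd (u v : vec) : vec := mkv (vx u + vx v) (vy u + vy v) (vz u + vz v).
Definition vsub (u v : vec) : vec := mkv (vx u - vx v) (vy u - vy v) (vz u - vz v).
Definition vscal (a : R) (v : vec) : vec := mkv (a * vx v) (a * vy v) (a * vz v).
Definition dot (u v : vec) : R := vx u * vx v + vy u * vy v + vz u * vz v.
Definition cross (u v : vec) : vec :=
  mkv (vy u * vz v - vz u * vy v) (vz u * vx v - vx u * vz v) (vx u * vy v - vy u * vx v).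
Definition vnorm (v : vec) : R := sqrt (dot v v).

(** * The circle S = R/Z, represented through real representatives *)
Definition same_S (x y : R) : Prop := exists k : Z, x - y = IZR k.

(* x lies on the arc [a,b] of S, i.e. the arc from a to b in the positive
   direction (frac_part is the representative in [0,1)). *)
Definition in_arc (a b x : R) : Prop := frac_part (x - a) <= frac_part (b - a).

(** * Closed curves gamma : S -> R^3, as 1-periodic maps R -> R^3 *)
Definition periodic1 (g : R -> vec) : Prop := forall t, g (t + 1) = g t.

Definition deriv (g : R -> vec) (t : R) : vec :=
  mkv (Derive (fun u => vx (g u)) t) (Derive (fun u => vy (g u)) t)
      (Derive (fun u => vz (g u)) t).

Definition C1_closed (g : R -> vec) : Prop :=
  periodic1 g /\
  forall t,
    (ex_derive (fun u => vx (g u)) t /\ ex_derive (fun u => vy (g u)) t /\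
     ex_derive (fun u => vz (g u)) t) /\
    (continuous (Derive (fun u => vx (g u))) t /\
     continuous (Derive (fun u => vy (g u))) t /\
     continuous (Derive (fun u => vz (g u))) t).

Definition simple_closed (g : R -> vec) : Prop :=
  forall s t, g s = g t -> same_S s t.

Definition length (g : R -> vec) : R := RInt (fun t => vnorm (deriv g t)) 0 1.

(* is_crad x y z r : r is the (finite) radius of the smallest circle through
   x, y, z.  Pairwise distinct collinear points have infinite radius (a line),
   hence no finite radius. *)
Definition is_crad (x y z : vec) (r : R) : Prop :=
  (x = y /\ y = z /\ r = 0) \/
  (x = y /\ y <> z /\ r = vnorm (vsub x z) / 2) \/
  (y = z /\ x <> y /\ r = vnorm (vsub x y) / 2) \/
  (x = z /\ x <> y /\ r = vnorm (vsub x y) / 2) \/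
  (x <> y /\ y <> z /\ x <> z /\
   cross (vsub y x) (vsub z x) <> mkv 0 0 0 /\
   r = vnorm (vsub x y) * vnorm (vsub y z) * vnorm (vsub z x)
       / (2 * vnorm (cross (vsub y x) (vsub z x)))).

(* Delta[gamma] = inf R(gamma s, gamma sigma, gamma tau) over pairwise distinct
   parameters of S (infinite radii do not affect the infimum). *)
Definition thickness (g : R -> vec) : Rbar :=
  Glb_Rbar (fun r => exists s u t,
    ~ same_S s u /\ ~ same_S u t /\ ~ same_S s t /\ is_crad (g s) (g u) (g t) r).

Definition ambient_isotopic (g1 g2 : R -> vec) : Prop :=
  exists H : R -> vec -> vec,
    (forall p : R * vec, continuous (fun q : R * vec => H (fst q) (snd q)) p) /\
    (forall x, H 0 x = x) /\
    (forall t, 0 <= t <= 1 -> exists G : vec -> vec,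
        (forall x, G (H t x) = x) /\ (forall y, H t (G y) = y) /\
        (forall y, continuous G y)) /\
    (forall s, exists s', H 1 (g1 s) = g2 s') /\
    (forall s', exists s, H 1 (g1 s) = g2 s').

Definition std_trefoil (t : R) : vec :=
  mkv (sin (2 * PI * t) + 2 * sin (4 * PI * t))
      (cos (2 * PI * t) - 2 * cos (4 * PI * t))
      (- sin (6 * PI * t)).

Definition is_trefoil (g : R -> vec) : Prop :=
  C1_closed g /\ simple_closed g /\ ambient_isotopic std_trefoil g.

Definition ideal_trefoil (g : R -> vec) : Prop :=
  is_trefoil g /\
  exists d, thickness g = Finite d /\ 0 < d /\
    forall h e, is_trefoil h -> thickness h = Finite e -> 0 < e ->
      length g / d <= length h / e.

Definition constant_speed (g : R -> vec) : Prop :=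
  exists c, forall t, vnorm (deriv g t) = c.

(* rotation by angle th about the axis through p with unit direction u (Rodrigues) *)
Definition rot (p u : vec) (th : R) (x : vec) : vec :=
  let v := vsub x p in
  vadd p (vadd (vadd (vscal (cos th) v) (vscal (sin th) (cross u v)))
               (vscal (dot u v * (1 - cos th)) u)).

Definition invariant_under (g : R -> vec) (f : vec -> vec) : Prop :=
  forall t, exists t', f (g t) = g t'.

Definition trefoil_symmetric_at_0 (g : R -> vec) : Prop :=
  exists p u w1 w2 w3 : vec,
    vnorm u = 1 /\ vnorm w1 = 1 /\ vnorm w2 = 1 /\ vnorm w3 = 1 /\
    dot u w1 = 0 /\ dot u w2 = 0 /\ dot u w3 = 0 /\
    w1 <> w2 /\ w1 <> vscal (-1) w2 /\ w1 <> w3 /\ w1 <> vscal (-1) w3 /\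
    w2 <> w3 /\ w2 <> vscal (-1) w3 /\
    invariant_under g (rot p u (2 * PI / 3)) /\
    invariant_under g (rot p w1 PI) /\
    invariant_under g (rot p w2 PI) /\
    invariant_under g (rot p w3 PI) /\
    (exists l, g 0 = vadd p (vscal l w1)) /\
    (forall t l, g t = vadd p (vscal l w1) -> vnorm (vsub (g t) p) <= vnorm (vsub (g 0) p)).

Definition in_contact (g : R -> vec) (s t : R) : Prop :=
  exists d, thickness g = Finite d /\
    vnorm (vsub (g t) (g s)) = 2 * d /\
    dot (vsub (g t) (g s)) (deriv g s) = 0 /\
    dot (vsub (g t) (g s)) (deriv g t) = 0.

(* A map sigma : S -> S is represented by a continuous lift F : R -> R.
   Well-defined on S, bijective on S, orientation preserving (the lift is
   nondecreasing), and every chord gamma(s) - gamma(sigma s) is a contact. *)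
Definition contact_function (g : R -> vec) (F : R -> R) : Prop :=
  (forall x, continuous F x) /\
  (forall x y, same_S x y -> same_S (F x) (F y)) /\
  (forall x y, same_S (F x) (F y) -> same_S x y) /\
  (forall y, exists x, same_S (F x) y) /\
  (forall x y, x <= y -> F x <= F y) /\
  (forall s, in_contact g s (F s)).

Definition sseq (F : R -> R) (i : nat) : R := Nat.iter i F 0.

Definition rep (x : R) : R := frac_part x.

Definition maps_arc_onto (F : R -> R) (a b c d : R) : Prop :=
  forall y, in_arc c d y <-> exists x, in_arc a b x /\ same_S (F x) y.

(* A contact function is represented by a continuous, nondecreasing lift F
   that is injective on R/Z.  Such a lift is strictly increasing of degree one,
   F (x + 1) = F x + 1, so it maps every arc [a, b] of R/Z bijectively and in
   order onto the arc [F a, F b].  The nine contact statements are instances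
   of this, after identifying s_9 with s_0. *)
From Stdlib Require Import Reals.
From Coquelicot Require Import Coquelicot.
From Stdlib Require Import Lra Lia ZArith.
Open Scope R_scope.

Lemma same_S_refl x : same_S x x.
Proof. exists 0%Z; simpl; ring. Qed.

Lemma same_S_eq x y : same_S x y -> -1 < x - y < 1 -> x = y.
Proof.
  intros [k Hk] [Hlo Hhi]; rewrite Hk in Hlo, Hhi.
  assert (k = 0)%Z.
  { apply lt_IZR in Hhi; change (-1) with (IZR (-1)) in Hlo; apply lt_IZR in Hlo; lia. }
  subst k; simpl in Hk; lra.
Qed.

Lemma frac_part_unique x a : 0 <= a < 1 -> same_S x a -> frac_part x = a.
Proof.
  intros Ha [k Hk]; destruct (base_fp x) as [H0 H1].
  apply same_S_eq; [|lra].
  exists (k - Int_part x)%Z; rewrite minus_IZR; unfold frac_part in *; lra.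
Qed.

Lemma frac_part_same_S x : same_S x (frac_part x).
Proof. exists (Int_part x); unfold frac_part; ring. Qed.

Lemma frac_part_plus_IZR x k : frac_part (x + IZR k) = frac_part x.
Proof.
  apply frac_part_unique; [destruct (base_fp x); lra|].
  exists (Int_part x + k)%Z; rewrite plus_IZR; unfold frac_part; ring.
Qed.

Lemma maps_arc_onto_same_S F a b c d c' d' :
  same_S c c' -> same_S d d' -> maps_arc_onto F a b c d -> maps_arc_onto F a b c' d'.
Proof.
  intros [k Hk] [l Hl] H y; specialize (H y); unfold in_arc in *.
  replace (y - c') with ((y - c) + IZR k) by lra.
  replace (d' - c') with ((d - c) + IZR (k - l)) by (rewrite minus_IZR; lra).
  rewrite !frac_part_plus_IZR; exact H.
Qed.

Section CircleLift.

Variable F : R -> R.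
Hypothesis F_cont : forall x, continuous F x.
Hypothesis F_same_S : forall x y, same_S x y -> same_S (F x) (F y).
Hypothesis F_inj_S : forall x y, same_S (F x) (F y) -> same_S x y.
Hypothesis F_nondecr : forall x y, x <= y -> F x <= F y.

Lemma lift_IVT u v t : u <= v -> F u <= t <= F v -> exists x, u <= x <= v /\ F x = t.
Proof.
  intros Huv Ht.
  assert (Hc : continuity F) by (intro x; apply continuity_pt_filterlim, F_cont).
  destruct (IVT_gen F u v t Hc) as [x [Hx Fx]];
    rewrite ?Rmin_left, ?Rmax_right in *; try lra.
  now exists x.
Qed.

(* Injectivity mod 1 forbids F from being constant on [x, x + 1/2]. *)
Lemma lift_step_pos x : F x < F (x + 1).
Proof.
  pose proof (F_nondecr x (x + /2) ltac:(lra)) as Hhalf.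
  pose proof (F_nondecr (x + /2) (x + 1) ltac:(lra)) as Hhalf'.
  destruct Hhalf as [|E]; [lra|].
  assert (Hx : same_S x (x + /2)) by (apply F_inj_S; rewrite E; apply same_S_refl).
  apply same_S_eq in Hx; lra.
Qed.

(* Degree one: a larger integer step would let F take the value F x + 1
   strictly inside (x, x + 1), contradicting injectivity mod 1. *)
Lemma lift_plus1 x : F (x + 1) = F x + 1.
Proof.
  destruct (F_same_S (x + 1) x) as [k Hk]; [exists 1%Z; simpl; ring|].
  pose proof (lift_step_pos x) as Hpos.
  assert (Hk1 : (1 <= k)%Z).
  { destruct (Z_le_gt_dec 1 k) as [|Hlt]; [easy|].
    assert (Hk0 : IZR k <= 0) by (apply IZR_le; lia); lra. }
  destruct (Z.eq_dec k 1) as [->|Hne]; [simpl in Hk; lra|].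
  assert (H2 : 2 <= IZR k) by (apply IZR_le; lia).
  destruct (lift_IVT x (x + 1) (F x + 1)) as [z [Hz Fz]]; [lra|lra|].
  assert (Hzx : same_S z x) by (apply F_inj_S; exists 1%Z; simpl; lra).
  destruct (Req_dec z (x + 1)) as [->|Hz1]; [lra|].
  apply same_S_eq in Hzx; [subst z|]; lra.
Qed.

Lemma lift_plus_IZR x k : F (x + IZR k) = F x + IZR k.
Proof.
  induction k using Z.peano_ind.
  - now rewrite !Rplus_0_r.
  - rewrite succ_IZR; replace (x + (IZR k + 1)) with (x + IZR k + 1) by ring.
    rewrite lift_plus1, IHk; ring.
  - rewrite <- Z.sub_1_r, minus_IZR.
    pose proof (lift_plus1 (x + (IZR k - 1))) as E.
    replace (x + (IZR k - 1) + 1) with (x + IZR k) in E by ring; lra.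
Qed.

Lemma lift_strict x y : x < y -> F x < F y.
Proof.
  intros Hxy; destruct (F_nondecr x y ltac:(lra)) as [|E]; [easy|exfalso].
  destruct (Rlt_or_le (y - x) 1) as [Hsmall|Hbig].
  - assert (Hxy' : same_S x y) by (apply F_inj_S; rewrite E; apply same_S_refl).
    apply same_S_eq in Hxy'; lra.
  - pose proof (F_nondecr (x + 1) y ltac:(lra)) as Hy; rewrite lift_plus1 in Hy; lra.
Qed.

(* Write b = a + f + m with f = frac_part (b - a); then F maps [a, a + f]
   increasingly onto [F a, F (a + f)], an interval of length < 1. *)
Lemma maps_arc_onto_lift a b : maps_arc_onto F a b (F a) (F b).
Proof.
  unfold maps_arc_onto, in_arc; intro y.
  set (f := frac_part (b - a)).
  destruct (base_fp (b - a)) as [Hf0 Hf1]; fold f in Hf0, Hf1.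
  destruct (frac_part_same_S (b - a)) as [m Hm]; fold f in Hm.
  pose proof (F_nondecr a (a + f) ltac:(lra)) as Haf.
  pose proof (lift_strict (a + f) (a + 1) ltac:(lra)) as Haf'; rewrite lift_plus1 in Haf'.
  assert (Ef : frac_part (F b - F a) = F (a + f) - F a).
  { replace b with (a + f + IZR m) by lra; rewrite lift_plus_IZR.
    apply frac_part_unique; [lra|].
    exists m; ring. }
  rewrite Ef; split.
  - intros Hy; destruct (base_fp (y - F a)) as [Hg0 Hg1].
    destruct (lift_IVT a (a + f) (F a + frac_part (y - F a))) as [x [Hx Fx]]; [lra|lra|].
    exists x; split.
    + rewrite (frac_part_unique (x - a) (x - a)); [lra|lra|apply same_S_refl].
    + destruct (frac_part_same_S (y - F a)) as [k Hk].
      exists (- k)%Z; rewrite opp_IZR; lra.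
  - intros [x [Hx [k Hk]]].
    set (e := frac_part (x - a)) in *.
    destruct (base_fp (x - a)) as [He0 He1]; fold e in He0, He1.
    destruct (frac_part_same_S (x - a)) as [n Hn]; fold e in Hn.
    replace x with (a + e + IZR n) in Hk by lra; rewrite lift_plus_IZR in Hk.
    pose proof (F_nondecr a (a + e) ltac:(lra)) as Hae.
    pose proof (F_nondecr (a + e) (a + f) ltac:(lra)) as Hef.
    rewrite (frac_part_unique (y - F a) (F (a + e) - F a)); [lra|lra|].
    exists (n - k)%Z; rewrite minus_IZR; lra.
Qed.

End CircleLift.

Theorem lemma6 (g : R -> vec) (F : R -> R) :
  ideal_trefoil g ->
  constant_speed g ->
  trefoil_symmetric_at_0 g ->
  contact_function g F ->
  same_S (sseq F 9) 0 ->
  (rep (sseq F 0) = 0 /\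
   rep (sseq F 0) < rep (sseq F 7) /\ rep (sseq F 7) < rep (sseq F 5) /\
   rep (sseq F 5) < rep (sseq F 3) /\ rep (sseq F 3) < rep (sseq F 1) /\
   rep (sseq F 1) < rep (sseq F 8) /\ rep (sseq F 8) < rep (sseq F 6) /\
   rep (sseq F 6) < rep (sseq F 4) /\ rep (sseq F 4) < rep (sseq F 2)) ->
  (forall i j : nat,
     maps_arc_onto F (sseq F i) (sseq F j) (sseq F (S i)) (sseq F (S j))) /\
  (* alpha1 -> beta1~ -> beta3 -> alpha3 -> beta3~ -> beta2 -> alpha2
     -> beta2~ -> beta1 -> alpha1 *)
  maps_arc_onto F (sseq F 1) (sseq F 8) (sseq F 2) (sseq F 0) /\
  maps_arc_onto F (sseq F 2) (sseq F 0) (sseq F 3) (sseq F 1) /\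
  maps_arc_onto F (sseq F 3) (sseq F 1) (sseq F 4) (sseq F 2) /\
  maps_arc_onto F (sseq F 4) (sseq F 2) (sseq F 5) (sseq F 3) /\
  maps_arc_onto F (sseq F 5) (sseq F 3) (sseq F 6) (sseq F 4) /\
  maps_arc_onto F (sseq F 6) (sseq F 4) (sseq F 7) (sseq F 5) /\
  maps_arc_onto F (sseq F 7) (sseq F 5) (sseq F 8) (sseq F 6) /\
  maps_arc_onto F (sseq F 8) (sseq F 6) (sseq F 0) (sseq F 7) /\
  maps_arc_onto F (sseq F 0) (sseq F 7) (sseq F 1) (sseq F 8).
Proof.
  intros _ _ _ [Hcont [Hwd [Hinj [_ [Hmono _]]]]] H9 _.
  assert (M : forall i j : nat,
             maps_arc_onto F (sseq F i) (sseq F j) (sseq F (S i)) (sseq F (S j)))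
    by (intros i j; apply (maps_arc_onto_lift F Hcont Hwd Hinj Hmono)).
  pose proof (maps_arc_onto_same_S F _ _ _ _ _ _ (same_S_refl _) H9 (M 1 8)%nat) as M18.
  pose proof (maps_arc_onto_same_S F _ _ _ _ _ _ H9 (same_S_refl _) (M 8 6)%nat) as M86.
  exact (conj M (conj M18 (conj (M 2 0) (conj (M 3 1) (conj (M 4 2)
    (conj (M 5 3) (conj (M 6 4) (conj (M 7 5) (conj M86 (M 0 7))))))))))%nat.
Qed.
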